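(* Assume $e_{-1}+e_{+1}<1$ and $\delta_{\tilde p}\neq 0$, and let $\alpha=1-(1-e_{-1}-e_{+1})\cdot\frac{\delta_p}{\delta_{\tilde p}}$. Then there is a constant $c>0$ such that for any measurable classifiers $f,f':\mathcal X\to\{-1,+1\}$, $$\mathbb E_{\tilde{\mathcal D}}[\mathbb 1_{\alpha\text{-peer}}(f(X),\tilde Y)]-\mathbb E_{\tilde{\mathcal D}}[\mathbb 1_{\alpha\text{-peer}}(f'(X),\tilde Y)]=c\,(1-e_{-1}-e_{+1})\bigl(\mathbb E_{\mathcal D}[\mathbb 1(f(X),Y)]-\mathbb E_{\mathcal D}[\mathbb 1(f'(X),Y)]\bigr).$$
   Context: Let $\mathcal X\subseteq\mathbb R^d$ and let $(X,Y)$ be a random pair with distribution $\mathcal D$ on $\mathcal X\times\{-1,+1\}$, with $p:=\mathbb P(Y=+1)\in(0,1)$. A noisy label $\tilde Y\in\{-1,+1\}$ is generated with noise rates $e_{+1}:=\mathbb P(\tilde Y=-1\mid Y=+1)$, $e_{-1}:=\mathbb P(\tilde Y=+1\mid Y=-1)$, where $\tilde Y$ is conditionally independent of $X$ given $Y$; $\tilde{\mathcal D}$ is the distribution of $(X,\tilde Y)$. Let $\delta_p:=\mathbb P(Y=+1)-\mathbb P(Y=-1)$ and $\delta_{\tilde p}:=\mathbb P(\tilde Y=+1)-\mathbb P(\tilde Y=-1)$. The 0-1 loss is $\mathbb 1(a,b)=1$ if $a\neq b$ and $0$ otherwise. For a weight $\alpha$, $$\mathbb E_{\tilde{\mathcal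 D}}[\mathbb 1_{\alpha\text{-peer}}(f(X),\tilde Y)]:=\mathbb E[\mathbb 1(f(X),\tilde Y)]-\alpha\,\mathbb E[\mathbb 1(f(X_1),\tilde Y_2)],$$ where $(X,\tilde Y),(X_1,\tilde Y_1),(X_2,\tilde Y_2)$ are i.i.d. draws from $\tilde{\mathcal D}$. *)

From mathcomp Require Import all_boot all_order all_algebra.
From mathcomp Require Import all_classical all_reals all_analysis.
Set Implicit Arguments. Unset Strict Implicit. Unset Printing Implicit Defensive.
Import Order.TTheory GRing.Theory Num.Theory.
Local Open Scope classical_set_scope.
Local Open Scope ring_scope.

(* Labels: true = +1, false = -1. *)

Section PeerDefs.
Context {R : realType} {d : measure_display} {Omega : measurableType d}.
Variable P : probability Omega R.

Definition pr (A : set Omega) : R := fine (P A).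

Definition cpr (A B : set Omega) : R := pr (A `&` B) / pr B.

Definition same_law {dT} {T : measurableType dT} (Z Z' : Omega -> T) : Prop :=
  forall A : set T, measurable A -> P (Z @^-1` A) = P (Z' @^-1` A).

Definition indep2 {dT dU} {T : measurableType dT} {U : measurableType dU}
  (Z1 : Omega -> T) (Z2 : Omega -> U) : Prop :=
  forall (A : set T) (B : set U), measurable A -> measurable B ->
    P (Z1 @^-1` A `&` Z2 @^-1` B) = (P (Z1 @^-1` A) * P (Z2 @^-1` B))%E.

(* Z is conditionally independent of W given the discrete label Y *)
Definition cond_indep_bool {dT} {T : measurableType dT}
  (Z : Omega -> bool) (W : Omega -> T) (Y : Omega -> bool) : Prop :=
  forall (A : set T) (a b : bool), measurable A ->
    (P (W @^-1` A `&` [set w | Z w = a] `&` [set w | Y w = b]) *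
       P [set w | Y w = b] =
     P (W @^-1` A `&` [set w | Y w = b]) *
       P ([set w | Z w = a] `&` [set w | Y w = b]))%E.

(* E[1(f(X), Y)] for a 0-1 loss = probability of disagreement *)
Definition err01 {dx} {Xs : measurableType dx}
  (f : Xs -> bool) (X : Omega -> Xs) (Y : Omega -> bool) : R :=
  pr [set w | f (X w) != Y w].

(* E[1_{alpha-peer}(f(X), Yt)] = E[1(f(X),Yt)] - alpha E[1(f(X1),Yt2)] *)
Definition peer_err {dx} {Xs : measurableType dx} (alpha : R)
  (f : Xs -> bool) (X X1 : Omega -> Xs) (Yt Yt2 : Omega -> bool) : R :=
  err01 f X Yt - alpha * err01 f X1 Yt2.

Definition delta (Y : Omega -> bool) : R :=
  pr [set w | Y w = true] - pr [set w | Y w = false].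

End PeerDefs.

From mathcomp Require Import all_boot all_order all_algebra.
From mathcomp Require Import all_classical all_reals all_analysis.
From mathcomp Require Import ring lra.
Set Implicit Arguments. Unset Strict Implicit. Unset Printing Implicit Defensive.
Import Order.TTheory GRing.Theory Num.Theory.
Local Open Scope classical_set_scope.
Local Open Scope ring_scope.

(* Write [a = P(f X = 1, Y = 1)] and [b = P(f X = 1, Y = -1)].  As [Yt] is
   conditionally independent of [X] given [Y], the noisy risk [P(f X <> Yt)]
   equals [P(Yt = 1) + (2 e_{+1} - 1) a + (1 - 2 e_{-1}) b]; as [(X1, Yt1)] and
   [(X2, Yt2)] are independent copies of [(X, Yt)], the peer term
   [P(f X1 <> Yt2)] equals [P(Yt = 1) - (a + b) delta_Yt].  The given [alpha]
   is the one for which the [alpha]-peer risk becomes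
   [const + (1 - e_{-1} - e_{+1}) P(f X <> Y)], so [c = 1] works. *)

Lemma peer_risk_identity (R : fieldType) (p ep en mTT mTF mFT mFF : R) :
  mTT + mFT = p -> mTF + mFF = 1 - p ->
  let pt := p * (1 - ep) + (1 - p) * en in
  let pf := p * ep + (1 - p) * (1 - en) in
  pt - pf != 0 ->
  let alpha := 1 - (1 - en - ep) * ((p - (1 - p)) / (pt - pf)) in
  (mTT * ep + mFT * (1 - ep) + mTF * (1 - en) + mFF * en)
    - alpha * ((mTT + mTF) * pf + (mFT + mFF) * pt)
  = (1 - alpha) * pt - (1 - en - ep) * p + (1 - en - ep) * (mTF + mFT).
Proof.
move=> hT hF pt pf hd alpha.
have -> : mTT = p - mFT by rewrite -hT; ring.
have -> : mFF = 1 - p - mTF by rewrite -hF; ring.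
move: hd; rewrite /alpha /pt /pf => hd; field; exact: hd.
Qed.

Lemma measurable_preimage {dA dT} {A : measurableType dA} {T : measurableType dT}
    (g : A -> T) (B : set T) :
  measurable_fun setT g -> measurable B -> measurable (g @^-1` B).
Proof. by move=> mg mB; rewrite -[_ @^-1` _]setTI; exact: mg. Qed.

Local Notation event Z b := [set w | Z w = b].

Section BoolEvents.
Context {R : realType} {d : measure_display} {Omega : measurableType d}.
Variable P : probability Omega R.

Lemma measurable_event (Z : Omega -> bool) (b : bool) :
  measurable_fun setT Z -> measurable (event Z b).
Proof. by move=> mZ; exact: (measurable_preimage (B := [set b]) mZ). Qed.

Lemma pr_setT : pr P setT = 1.
Proof. by rewrite /pr probability_setT. Qed.

Lemma pr_setU (A B : set Omega) : measurable A -> measurable B ->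
  A `&` B = set0 -> pr P (A `|` B) = pr P A + pr P B.
Proof. by move=> mA mB AB; rewrite /pr measureU // fineD //; exact: fin_num_measure. Qed.

Lemma fine_prM (A B : set Omega) : measurable A -> measurable B ->
  fine (P A * P B)%E = pr P A * pr P B.
Proof. by move=> mA mB; rewrite fineM //; exact: fin_num_measure. Qed.

Lemma pr_split_bool (A : set Omega) (Z : Omega -> bool) :
  measurable A -> measurable_fun setT Z ->
  pr P A = pr P (A `&` event Z true) + pr P (A `&` event Z false).
Proof.
move=> mA mZ; rewrite -pr_setU.
- by congr pr; apply/seteqP; split=> w /=;
    [case: (Z w) => Aw; [left | right] | case=> -[]].
- exact/measurableI/measurable_event.
- exact/measurableI/measurable_event.
- by apply/seteqP; split=> w //= [[_ ->] []].
Qed.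

Lemma pr_neq_bool (U V : Omega -> bool) :
  measurable_fun setT U -> measurable_fun setT V ->
  pr P [set w | U w != V w] =
  pr P (event U true `&` event V false) + pr P (event U false `&` event V true).
Proof.
move=> mU mV; rewrite -pr_setU.
- congr pr; apply/seteqP; split=> w /=; last by case=> -[-> ->].
  by case: (U w); case: (V w) => //= _; [left | right].
- by apply: measurableI; exact: measurable_event.
- by apply: measurableI; exact: measurable_event.
- by apply/seteqP; split=> w //= [[-> _] [+ _]].
Qed.

Lemma prI_cpr (A B : set Omega) : pr P B != 0 -> pr P (A `&` B) = cpr P A B * pr P B.
Proof. by move=> hB; rewrite /cpr mulfVK. Qed.

Lemma cpr_bool_sum (Z : Omega -> bool) (B : set Omega) :
  measurable_fun setT Z -> measurable B -> pr P B != 0 ->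
  cpr P (event Z true) B + cpr P (event Z false) B = 1.
Proof.
move=> mZ mB hB; rewrite /cpr -mulrDl ![_ `&` B]setIC -pr_split_bool //.
exact: divff.
Qed.

Lemma pr_event_false (Z : Omega -> bool) : measurable_fun setT Z ->
  pr P (event Z false) = 1 - pr P (event Z true).
Proof.
by move=> mZ; rewrite -pr_setT (pr_split_bool measurableT mZ) !setTI addrC addKr.
Qed.

Lemma pr_total_bool (A : set Omega) (Y : Omega -> bool) :
  measurable A -> measurable_fun setT Y ->
  pr P (event Y true) != 0 -> pr P (event Y false) != 0 ->
  pr P A = cpr P A (event Y true) * pr P (event Y true)
         + cpr P A (event Y false) * pr P (event Y false).
Proof. by move=> mA mY hT hF; rewrite -!prI_cpr // -pr_split_bool. Qed.

End BoolEvents.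

Section NoisyLabels.
Context {R : realType} {d : measure_display} {Omega : measurableType d}.
Variable P : probability Omega R.
Context {dx : measure_display} {Xs : measurableType dx}.
Variables (X X1 X2 : Omega -> Xs) (Y Yt Yt1 Yt2 : Omega -> bool).
Hypotheses (mX : measurable_fun setT X) (mX1 : measurable_fun setT X1)
  (mY : measurable_fun setT Y) (mYt : measurable_fun setT Yt)
  (mYt2 : measurable_fun setT Yt2).
Hypothesis hcond : cond_indep_bool P Yt X Y.
Hypotheses (hYT : pr P (event Y true) != 0) (hYF : pr P (event Y false) != 0).
Hypothesis hlaw1 : same_law P (fun w => (X1 w, Yt1 w)) (fun w => (X w, Yt w)).
Hypothesis hlaw2 : same_law P (fun w => (X2 w, Yt2 w)) (fun w => (X w, Yt w)).
Hypothesis hind : indep2 P (fun w => (X1 w, Yt1 w)) (fun w => (X2 w, Yt2 w)).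

Lemma pr_preimageI_noisy (A : set Xs) (a : bool) : measurable A ->
  pr P (X @^-1` A `&` event Yt a) =
    pr P (X @^-1` A `&` event Y true) * cpr P (event Yt a) (event Y true)
  + pr P (X @^-1` A `&` event Y false) * cpr P (event Yt a) (event Y false).
Proof.
move=> mA; have mXA := measurable_preimage mX mA.
have mYt_a := measurable_event a mYt.
have cond_split c : pr P (event Y c) != 0 ->
    pr P (X @^-1` A `&` event Yt a `&` event Y c)
    = pr P (X @^-1` A `&` event Y c) * cpr P (event Yt a) (event Y c).
  move=> hc; apply: (mulIf hc); rewrite -mulrA -prI_cpr //.
  have mYc := measurable_event c mY.
  by rewrite -!fine_prM ?(hcond a c mA) //; do !apply: measurableI.
by rewrite (pr_split_bool P _ mY) ?cond_split //; exact: measurableI.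
Qed.

Lemma pr_preimageI_copy (A : set Xs) (a : bool) : measurable A ->
  pr P (X1 @^-1` A `&` event Yt2 a) = pr P (X @^-1` A) * pr P (event Yt a).
Proof.
move=> mA; have mAT : measurable (A `*` [set: bool]) by exact: measurableX.
have mTa : measurable ([set: Xs] `*` [set a]) by exact: measurableX.
have := hind mAT mTa; rewrite (hlaw1 mAT) (hlaw2 mTa).
have preimage_fst (U : Omega -> Xs) (V : Omega -> bool) :
    (fun w => (U w, V w)) @^-1` (A `*` [set: bool]) = U @^-1` A.
  by apply/seteqP; split=> w /=; [case |].
have preimage_snd (U : Omega -> Xs) (V : Omega -> bool) :
    (fun w => (U w, V w)) @^-1` ([set: Xs] `*` [set a]) = event V a.
  by apply/seteqP; split=> w /=; [case |].
rewrite !preimage_fst !preimage_snd => /(congr1 fine).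
rewrite -fine_prM; [exact | exact: measurable_preimage | exact: measurable_event].
Qed.

Local Notation e_pos := (cpr P (event Yt false) (event Y true)).
Local Notation e_neg := (cpr P (event Yt true) (event Y false)).
Local Notation joint g v c := (pr P ([set w | g (X w) = v] `&` event Y c)).

Lemma cpr_correct_pos : cpr P (event Yt true) (event Y true) = 1 - e_pos.
Proof. by have := cpr_bool_sum mYt (measurable_event true mY) hYT; lra. Qed.

Lemma cpr_correct_neg : cpr P (event Yt false) (event Y false) = 1 - e_neg.
Proof. by have := cpr_bool_sum mYt (measurable_event false mY) hYF; lra. Qed.

Lemma err01_noisy (g : Xs -> bool) : measurable_fun setT g ->
  err01 P g X Yt = joint g true true * e_pos + joint g false true * (1 - e_pos)
                 + joint g true false * (1 - e_neg) + joint g false false * e_neg.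
Proof.
move=> mg; have mgX : measurable_fun setT (fun w => g (X w)) by exact: measurableT_comp.
have joint_noisy v a : pr P ([set w | g (X w) = v] `&` event Yt a) =
    joint g v true * cpr P (event Yt a) (event Y true)
  + joint g v false * cpr P (event Yt a) (event Y false).
  exact: (@pr_preimageI_noisy (g @^-1` [set v]) a (measurable_event v mg)).
rewrite /err01 (pr_neq_bool P mgX mYt) !joint_noisy cpr_correct_pos cpr_correct_neg.
ring.
Qed.

Lemma err01_copies (g : Xs -> bool) : measurable_fun setT g ->
  err01 P g X1 Yt2 = pr P [set w | g (X w) = true] * pr P (event Yt false)
                   + pr P [set w | g (X w) = false] * pr P (event Yt true).
Proof.
move=> mg; have mgX1 : measurable_fun setT (fun w => g (X1 w)).
  exact: measurableT_comp.
rewrite /err01 (pr_neq_bool P mgX1 mYt2).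
by rewrite !(@pr_preimageI_copy (g @^-1` [set _])) //; exact: measurable_event.
Qed.

Lemma peer_err_affine (g : Xs -> bool) : measurable_fun setT g ->
  delta P Yt != 0 ->
  let alpha := 1 - (1 - e_neg - e_pos) * (delta P Y / delta P Yt) in
  peer_err P alpha g X X1 Yt Yt2 =
    (1 - alpha) * pr P (event Yt true) - (1 - e_neg - e_pos) * pr P (event Y true)
    + (1 - e_neg - e_pos) * err01 P g X Y.
Proof.
move=> mg hd alpha; set p := pr P (event Y true).
have mgX : measurable_fun setT (fun w => g (X w)) by exact: measurableT_comp.
have pYF : pr P (event Y false) = 1 - p := pr_event_false P mY.
have pYt a : pr P (event Yt a) = p * cpr P (event Yt a) (event Y true)
                               + (1 - p) * cpr P (event Yt a) (event Y false).
  by rewrite (pr_total_bool (measurable_event a mYt) mY hYT hYF) pYF mulrC [X in _ + X]mulrC.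
have pYtT : pr P (event Yt true) = p * (1 - e_pos) + (1 - p) * e_neg.
  by rewrite pYt cpr_correct_pos.
have pYtF : pr P (event Yt false) = p * e_pos + (1 - p) * (1 - e_neg).
  by rewrite pYt cpr_correct_neg.
have pgX v : pr P [set w | g (X w) = v] = joint g v true + joint g v false.
  exact: pr_split_bool (measurable_event v mgX) mY.
have jointT : joint g true true + joint g false true = p.
  by rewrite /p (pr_split_bool P (measurable_event true mY) mgX) ![event Y true `&` _]setIC.
have jointF : joint g true false + joint g false false = 1 - p.
  by rewrite -pYF (pr_split_bool P (measurable_event false mY) mgX) ![event Y false `&` _]setIC.
move: hd; rewrite /alpha /peer_err /delta err01_noisy // err01_copies // !pgX.
rewrite /err01 (pr_neq_bool P mgX mY) pYtT pYtF pYF.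
exact: peer_risk_identity.
Qed.

End NoisyLabels.

Theorem proposition1 (R : realType) (d : measure_display) (Omega : measurableType d)
  (P : probability Omega R) (dx : measure_display) (Xs : measurableType dx)
  (X X1 X2 : Omega -> Xs) (Y Yt Yt1 Yt2 : Omega -> bool)
  (mX : measurable_fun setT X) (mX1 : measurable_fun setT X1)
  (mX2 : measurable_fun setT X2) (mY : measurable_fun setT Y)
  (mYt : measurable_fun setT Yt) (mYt1 : measurable_fun setT Yt1)
  (mYt2 : measurable_fun setT Yt2)
  (hp : 0 < pr P [set w | Y w = true] < 1)
  (hcond : cond_indep_bool P Yt X Y)
  (hlaw1 : same_law P (fun w => (X1 w, Yt1 w)) (fun w => (X w, Yt w)))
  (hlaw2 : same_law P (fun w => (X2 w, Yt2 w)) (fun w => (X w, Yt w)))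
  (hind : indep2 P (fun w => (X1 w, Yt1 w)) (fun w => (X2 w, Yt2 w))) :
  let e_pos := cpr P [set w | Yt w = false] [set w | Y w = true] in
  let e_neg := cpr P [set w | Yt w = true] [set w | Y w = false] in
  e_neg + e_pos < 1 ->
  delta P Yt != 0 ->
  let alpha := 1 - (1 - e_neg - e_pos) * (delta P Y / delta P Yt) in
  exists c : R, 0 < c /\
    forall f f' : Xs -> bool, measurable_fun setT f -> measurable_fun setT f' ->
      peer_err P alpha f X X1 Yt Yt2 - peer_err P alpha f' X X1 Yt Yt2 =
      c * (1 - e_neg - e_pos) * (err01 P f X Y - err01 P f' X Y).
Proof.
move=> e_pos e_neg _ hd alpha.
have pYT_gt0 : 0 < pr P (event Y true) by case/andP: hp.
have pYF_gt0 : 0 < pr P (event Y false).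
  by rewrite (pr_event_false P mY); case/andP: hp; rewrite subr_gt0.
have affine := peer_err_affine mX mX1 mY mYt mYt2 hcond
  (lt0r_neq0 pYT_gt0) (lt0r_neq0 pYF_gt0) hlaw1 hlaw2 hind.
exists 1; split=> // f f' mf mf'.
by rewrite (affine _ mf hd) (affine _ mf' hd) /e_pos /e_neg; ring.
Qed.
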